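(* Let $H$ be a weak Hopf algebra, let $E_h=[h_1][S(h_2)]\in{H_{par}^w}$ for $h\in H$, and let ${A_{par}^w}$ be the subalgebra of ${H_{par}^w}$ generated by $\{E_h: h\in H\}$. Then the linear map $H\otimes{A_{par}^w}\to{A_{par}^w}$, $h\otimes a\mapsto h\cdot a=[h_1]\,a\,[S(h_2)]$, is well defined and makes ${A_{par}^w}$ a symmetric partial $H$-module algebra.
   Context: All algebras are associative and unital over a field $\Bbbk$; Sweedler notation $\Delta(h)=h_1\otimes h_2$. A weak Hopf algebra is $(H,m,u,\Delta,\varepsilon,S)$ with $H$ an algebra, $(H,\Delta,\varepsilon)$ a coalgebra, and for all $g,h,k$: $\Delta(kh)=\Delta(k)\Delta(h)$; $\varepsilon(kh_1)\varepsilon(h_2g)=\varepsilon(khg)=\varepsilon(kh_2)\varepsilon(h_1g)$; $(1\otimes\Delta(1))(\Delta(1)\otimes1)=\Delta^2(1)=(\Delta(1)\otimes1)(1\otimes\Delta(1))$; $h_1S(h_2)=\varepsilon(1_1h)1_2$; $S(h_1)h_2=1_1\varepsilon(h1_2)$; $S(h)=S(h_1)h_2S(h_3)$, where $\Delta(1)=1_1\otimes1_2$. ${H_{par}^w}=T(H)/I$, where $T(H)$ is the tensor algebra of the vector space $H$ and $I$ is the ideal generated by, for all $h,k\in H$: $1_H-1_{T(H)}$; $h\otimes k_1\otimes S(k_2)-hk_1\otimes S(k_2)$; $h\otimes S(k_1)\otimes k_2-hS(k_1)\otimes k_2$; $h_1\otimes S(h_2)\otimes k-h_1\otimes S(h_2)k$;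 $S(h_1)\otimes h_2\otimes k-S(h_1)\otimes h_2k$; $h-h_1\otimes S(h_2)\otimes h_3$; $[h]$ denotes the class of $h$. A symmetric partial $H$-module algebra is an algebra $A$ with a linear map $h\otimes a\mapsto h\cdot a$ such that for all $h,k\in H$, $a,b\in A$: $h\cdot(ab)=(h_1\cdot a)(h_2\cdot b)$; $1_H\cdot a=a$; $h\cdot(k\cdot a)=(h_1\cdot1_A)((h_2k)\cdot a)$; $h\cdot(k\cdot a)=((h_1k)\cdot a)(h_2\cdot1_A)$. *)

From HB Require Import structures.
From mathcomp Require Import all_boot all_order all_algebra.
Set Implicit Arguments. Unset Strict Implicit. Unset Printing Implicit Defensive.
Import GRing.Theory.
Local Open Scope ring_scope.

(* Tensors in H (x) H (resp. H (x) H (x) H) are represented by finite lists of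
   pairs (triples) of simple tensors; two such lists represent the same tensor
   iff every bilinear (trilinear) map into every K-vector space takes the same
   value on them (universal property of the tensor product). *)
Section Tensors.
Variables (K : fieldType) (H : lmodType K).

Definition bilinear_map (V : lmodType K) (f : H -> H -> V) :=
  (forall y a x1 x2, f (a *: x1 + x2) y = a *: f x1 y + f x2 y) /\
  (forall x a y1 y2, f x (a *: y1 + y2) = a *: f x y1 + f x y2).

Definition trilinear_map (V : lmodType K) (f : H -> H -> H -> V) :=
  (forall y z a x1 x2, f (a *: x1 + x2) y z = a *: f x1 y z + f x2 y z) /\
  (forall x z a y1 y2, f x (a *: y1 + y2) z = a *: f x y1 z + f x y2 z) /\
  (forall x y a z1 z2, f x y (a *: z1 + z2) = a *: f x y z1 + f x y z2).

Definition teq2 (s t : seq (H * H)) : Prop :=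
  forall (V : lmodType K) (f : H -> H -> V), bilinear_map f ->
    \sum_(p <- s) f p.1 p.2 = \sum_(p <- t) f p.1 p.2.

Definition teq3 (s t : seq (H * H * H)) : Prop :=
  forall (V : lmodType K) (f : H -> H -> H -> V), trilinear_map f ->
    \sum_(p <- s) f p.1.1 p.1.2 p.2 = \sum_(p <- t) f p.1.1 p.1.2 p.2.

End Tensors.

Section WeakHopf.
Variables (K : fieldType) (H : algType K).

Definition cop2 (cop : H -> seq (H * H)) (h : H) : seq (H * H * H) :=
  flatten [seq [seq (q.1, q.2, p.2) | q <- cop p.1] | p <- cop h].

(* (Delta, eps, S) make the algebra H a weak Hopf algebra.
   Delta(h) = \sum_(p <- cop h) p.1 (x) p.2  (Sweedler: h_1 (x) h_2). *)
Definition is_weak_hopf (cop : H -> seq (H * H)) (eps : H -> K) (S : H -> H)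
  : Prop :=
  (forall a h k, teq2 (cop (a *: h + k))
                   ([seq (a *: p.1, p.2) | p <- cop h] ++ cop k)) /\
  (forall a h k, eps (a *: h + k) = a * eps h + eps k) /\
  (forall a h k, S (a *: h + k) = a *: S h + S k) /\
  (forall h, teq3 (cop2 cop h)
     (flatten [seq [seq (p.1, q.1, q.2) | q <- cop p.2] | p <- cop h])) /\
  (forall h, \sum_(p <- cop h) eps p.1 *: p.2 = h) /\
  (forall h, \sum_(p <- cop h) eps p.2 *: p.1 = h) /\
  (forall k h, teq2 (cop (k * h))
     (flatten [seq [seq (p.1 * q.1, p.2 * q.2) | q <- cop h] | p <- cop k])) /\
  (forall k h g,
     \sum_(p <- cop h) eps (k * p.1) * eps (p.2 * g) = eps (k * h * g)) /\
  (forall k h g,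
     eps (k * h * g) = \sum_(p <- cop h) eps (k * p.2) * eps (p.1 * g)) /\
  teq3 (flatten [seq [seq (q.1, p.1 * q.2, p.2) | q <- cop 1] | p <- cop 1])
       (cop2 cop 1) /\
  teq3 (cop2 cop 1)
       (flatten [seq [seq (q.1, q.2 * p.1, p.2) | p <- cop 1] | q <- cop 1]) /\
  (forall h, \sum_(p <- cop h) p.1 * S p.2
             = \sum_(q <- cop 1) eps (q.1 * h) *: q.2) /\
  (forall h, \sum_(p <- cop h) S p.1 * p.2
             = \sum_(q <- cop 1) eps (h * q.2) *: q.1) /\
  (forall h, S h = \sum_(p <- cop2 cop h) S p.1.1 * p.1.2 * S p.2).

(* The relations generating the ideal I, for a linear map pi : H -> C into
   an algebra C (pi(h) plays the role of the class [h]). *)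
Definition par_rep (cop : H -> seq (H * H)) (S : H -> H)
  (C : algType K) (pi : H -> C) : Prop :=
  (forall a h k, pi (a *: h + k) = a *: pi h + pi k) /\
  pi 1 = 1 /\
  (forall h k, \sum_(p <- cop k) pi h * pi p.1 * pi (S p.2)
               = \sum_(p <- cop k) pi (h * p.1) * pi (S p.2)) /\
  (forall h k, \sum_(p <- cop k) pi h * pi (S p.1) * pi p.2
               = \sum_(p <- cop k) pi (h * S p.1) * pi p.2) /\
  (forall h k, \sum_(p <- cop h) pi p.1 * pi (S p.2) * pi k
               = \sum_(p <- cop h) pi p.1 * pi (S p.2 * k)) /\
  (forall h k, \sum_(p <- cop h) pi (S p.1) * pi p.2 * pi k
               = \sum_(p <- cop h) pi (S p.1) * pi (p.2 * k)) /\
  (forall h, pi h = \sum_(p <- cop2 cop h) pi p.1.1 * pi (S p.1.2) * pi p.2).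

Definition is_alg_hom (B C : algType K) (F : B -> C) : Prop :=
  (forall a x y, F (a *: x + y) = a *: F x + F y) /\
  (forall x y, F (x * y) = F x * F y) /\ F 1 = 1.

(* (B, pi) is H_par^w = T(H)/I with pi h = [h]: characterised (up to unique
   isomorphism) by the universal property of T(H)/I. *)
Definition is_Hpar (cop : H -> seq (H * H)) (S : H -> H)
  (B : algType K) (pi : H -> B) : Prop :=
  par_rep cop S pi /\
  forall (C : algType K) (phi : H -> C), par_rep cop S phi ->
    (exists F : B -> C, is_alg_hom F /\ forall h, F (pi h) = phi h) /\
    (forall F G : B -> C, is_alg_hom F -> is_alg_hom G ->
       (forall h, F (pi h) = phi h) -> (forall h, G (pi h) = phi h) ->
       forall x, F x = G x).

Definition Epar (cop : H -> seq (H * H)) (S : H -> H) (B : algType K)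
  (pi : H -> B) (h : H) : B :=
  \sum_(p <- cop h) pi p.1 * pi (S p.2).

Definition is_subalg_pred (B : algType K) (P : B -> Prop) : Prop :=
  P 1 /\ (forall x y, P x -> P y -> P (x + y)) /\
  (forall a x, P x -> P (a *: x)) /\ (forall x y, P x -> P y -> P (x * y)).

Definition in_gen_subalg (B : algType K) (gen : H -> B) (x : B) : Prop :=
  forall P : B -> Prop, is_subalg_pred P -> (forall h, P (gen h)) -> P x.

Definition par_act (cop : H -> seq (H * H)) (S : H -> H) (B : algType K)
  (pi : H -> B) (h : H) (a : B) : B :=
  \sum_(p <- cop h) pi p.1 * a * pi (S p.2).

Definition sym_partial_module_subalg (cop : H -> seq (H * H))
  (B : algType K) (inA : B -> Prop) (act : H -> B -> B) : Prop :=
  (forall h a b, inA a -> inA b ->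
     act h (a * b) = \sum_(p <- cop h) act p.1 a * act p.2 b) /\
  (forall a, inA a -> act 1 a = a) /\
  (forall h k a, inA a ->
     act h (act k a) = \sum_(p <- cop h) act p.1 1 * act (p.2 * k) a) /\
  (forall h k a, inA a ->
     act h (act k a) = \sum_(p <- cop h) act (p.1 * k) a * act p.2 1).

End WeakHopf.

(** The heart of the argument is the commutation rule [h] a = (h_1 . a) [h_2]
    ([pi_commute a]). It holds for a = 1 by the relation [h] = [h_1][S h_2][h_3],
    it is preserved by sums, scalars and products, and for a generator E_k it is
    the identity [h] E_k = E_(h_1 k) [h_2], which follows from the relations of
    H_par^w together with the weak Hopf identities for the counital maps eps_t,
    eps_s and the antimultiplicativity of S. So it holds on all of A. It yields
    h . (a b) = (h_1 . a)(h_2 . b) and 1 . a = a, and with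
    h . E_k = E_(h_1) E_(h_2 k) = E_(h_1 k) E_(h_2) an induction over the
    generated subalgebra shows that A is stable under the action and satisfies
    both symmetric partial-action identities. *)

From HB Require Import structures.
From mathcomp Require Import all_boot all_order all_algebra.
Set Implicit Arguments. Unset Strict Implicit. Unset Printing Implicit Defensive.
Import GRing.Theory.
Local Open Scope ring_scope.

Section LinearMaps.
Variables (R : pzRingType) (U : lmodType R) (V : zmodType).
Variables (s : GRing.Scale.law R V) (f : U -> V).
Hypothesis f_linear : linear_for s f.

Lemma linD : {morph f : x y / x + y}.
Proof. exact: (GRing.semilinear_linear f_linear).2. Qed.

Lemma lin0 : f 0 = 0.
Proof. by apply: (addrI (f 0)); rewrite -linD !addr0. Qed.

Lemma lin_sum I (r : seq I) (F : I -> U) :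
  f (\sum_(i <- r) F i) = \sum_(i <- r) f (F i).
Proof. exact: (big_morph f linD lin0). Qed.

End LinearMaps.

Lemma linZ (R : pzRingType) (U W : lmodType R) (f : U -> W) :
  linear f -> forall a x, f (a *: x) = a *: f x.
Proof. exact: GRing.scalable_linear. Qed.

Lemma scalarZ (R : pzRingType) (U : lmodType R) (f : U -> R) :
  scalar f -> forall a x, f (a *: x) = a * f x.
Proof. exact: GRing.scalable_linear. Qed.

Lemma big_mul_ctx (R : pzRingType) I (r : seq I) (F G : I -> R) c d :
  \sum_(i <- r) F i = \sum_(i <- r) G i ->
  \sum_(i <- r) c * F i * d = \sum_(i <- r) c * G i * d.
Proof. by move=> eqFG; rewrite -!mulr_suml -!mulr_sumr eqFG. Qed.

Section LinearCombinators.
Variables (K : fieldType) (U V W : lmodType K).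

Lemma linear_id : linear (fun x : V => x). Proof. by []. Qed.

Lemma linear_comp (f : U -> W) (g : V -> U) :
  linear f -> linear g -> linear (fun x => f (g x)).
Proof. by move=> hf hg a x y; rewrite hg hf. Qed.

Lemma linear_scale (c : K) (f : V -> W) : linear f -> linear (fun x => c *: f x).
Proof. by move=> hf a x y; rewrite hf scalerDr !scalerA mulrC. Qed.

Lemma linear_big I (r : seq I) (F : V -> I -> W) :
  (forall i, linear (fun x => F x i)) -> linear (fun x => \sum_(i <- r) F x i).
Proof.
by move=> hF a x y; rewrite scaler_sumr -big_split; apply: eq_bigr => i _; apply: hF.
Qed.

Lemma linear_mull (A : algType K) (c : A) (f : V -> A) :
  linear f -> linear (fun x => c * f x).
Proof. by move=> hf a x y; rewrite hf mulrDr scalerAr. Qed.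

Lemma linear_mulr (A : algType K) (c : A) (f : V -> A) :
  linear f -> linear (fun x => f x * c).
Proof. by move=> hf a x y; rewrite hf mulrDl scalerAl. Qed.

Lemma linear_app1 (T : lmodType K) (G : U -> T -> W) (y : T) (g : V -> U) :
  (forall y, linear (fun x => G x y)) -> linear g -> linear (fun x => G (g x) y).
Proof. by move=> hG; apply: linear_comp (hG y). Qed.

Lemma linear_app2 (T : lmodType K) (G : T -> U -> W) (x : T) (g : V -> U) :
  (forall x, linear (G x)) -> linear g -> linear (fun y => G x (g y)).
Proof. by move=> hG; apply: linear_comp (hG x). Qed.

Lemma bilinear_mapP (F : U -> U -> W) :
  bilinear_map F <-> (forall y, linear (fun x => F x y)) /\ (forall x, linear (F x)).
Proof. by []. Qed.

Lemma trilinear_mapP (F : U -> U -> U -> W) :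
  trilinear_map F <-> [/\ forall y z, linear (fun x => F x y z),
                         forall x z, linear (fun y => F x y z) &
                         forall x y, linear (F x y)].
Proof. by split=> [[? []]|[]]. Qed.

End LinearCombinators.

Ltac linearity_with step :=
  repeat first [ match goal with |- forall _, _ => intro end | simpl; step ].

Ltac linear_step := first
  [ apply/bilinear_mapP; split | apply/trilinear_mapP; split
  | apply: linear_big | apply: linear_mull
  | apply: linear_mulr | apply: linear_scale | apply: linear_id
  | match goal with hG : forall _, linear (fun _ => _) |- _ => apply: (linear_app1 _ hG) end
  | match goal with hG : forall _, linear _ |- _ => apply: (linear_app2 _ hG) end ].

Section WeakHopfAlgebra.
Variables (K : fieldType) (H : algType K) (cop : H -> seq (H * H)).
Variables (eps : H -> K) (S : H -> H).
Hypothesis WH : is_weak_hopf cop eps S.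

Lemma S_linear : linear S.
Proof. by case: WH => _ [_ [hS _]] a x y; rewrite hS. Qed.

Lemma eps_scalar : scalar eps.
Proof. by case: WH => _ [heps _] a x y; rewrite heps. Qed.

Lemma linear_cop_sum (V : lmodType K) (F : H * H -> V) :
  bilinear_map (fun x y => F (x, y)) -> linear (fun h => \sum_(p <- cop h) F p).
Proof.
move=> hF a h k; case: WH => hcop _; have /= := hcop a h k V _ hF.
rewrite !(eq_bigr _ (fun p _ => congr1 F (surjective_pairing p))) => ->.
rewrite big_cat big_map scaler_sumr; congr (_ + _).
by apply: eq_bigr => p _; rewrite (linZ (hF.1 _)).
Qed.

Lemma linear_S_comp (V : lmodType K) (f : V -> H) : linear f -> linear (fun x => S (f x)).
Proof. exact: linear_comp S_linear. Qed.

Lemma linear_eps_scale (V W : lmodType K) (f : V -> H) (w : W) :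
  linear f -> linear (fun x => eps (f x) *: w).
Proof. by move=> hf a x y; rewrite hf eps_scalar scalerDl scalerA. Qed.

Ltac linear_wh_step := first
  [ apply: linear_cop_sum | apply: linear_S_comp | apply: linear_eps_scale
  | linear_step ].

Ltac linearity := linearity_with linear_wh_step.
Ltac linear_sides := try solve [linearity].

Lemma coassoc_sum (V : lmodType K) (F : H -> H -> H -> V) :
  trilinear_map F -> forall h,
  \sum_(p <- cop h) \sum_(q <- cop p.1) F q.1 q.2 p.2 =
  \sum_(p <- cop h) \sum_(q <- cop p.2) F p.1 q.1 q.2.
Proof.
move=> hF h; case: WH => _ [_ [_ [hcoassoc _]]].
by have := hcoassoc h V F hF; rewrite !big_allpairs_dep.
Qed.

Lemma cop_mul_sum (V : lmodType K) (F : H -> H -> V) :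
  bilinear_map F -> forall k h,
  \sum_(p <- cop (k * h)) F p.1 p.2 =
  \sum_(p <- cop k) \sum_(q <- cop h) F (p.1 * q.1) (p.2 * q.2).
Proof.
move=> hF k h; case: WH => _ [_ [_ [_ [_ [_ [hmul _]]]]]].
by rewrite (hmul k h V F hF) big_allpairs_dep.
Qed.

Lemma counitl h : \sum_(p <- cop h) eps p.1 *: p.2 = h.
Proof. by case: WH => _ [_ [_ [_ []]]]. Qed.

Lemma counitr h : \sum_(p <- cop h) eps p.2 *: p.1 = h.
Proof. by case: WH => _ [_ [_ [_ [_ []]]]]. Qed.

Lemma eps_mul_copl k h g :
  \sum_(p <- cop h) eps (k * p.1) * eps (p.2 * g) = eps (k * h * g).
Proof. by case: WH => _ [_ [_ [_ [_ [_ [_ []]]]]]]. Qed.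

Lemma eps_mul_copr k h g :
  eps (k * h * g) = \sum_(p <- cop h) eps (k * p.2) * eps (p.1 * g).
Proof. by case: WH => _ [_ [_ [_ [_ [_ [_ [_ []]]]]]]]. Qed.

Lemma cop2_onel (V : lmodType K) (F : H -> H -> H -> V) :
  trilinear_map F ->
  \sum_(p <- cop 1) \sum_(q <- cop 1) F q.1 (p.1 * q.2) p.2 =
  \sum_(p <- cop 1) \sum_(q <- cop p.1) F q.1 q.2 p.2.
Proof.
move=> hF; case: WH => _ [_ [_ [_ [_ [_ [_ [_ [_ [hone _]]]]]]]]].
by have := hone V F hF; rewrite !big_allpairs_dep.
Qed.

Lemma cop2_oner (V : lmodType K) (F : H -> H -> H -> V) :
  trilinear_map F ->
  \sum_(p <- cop 1) \sum_(q <- cop p.1) F q.1 q.2 p.2 =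
  \sum_(q <- cop 1) \sum_(p <- cop 1) F q.1 (q.2 * p.1) p.2.
Proof.
move=> hF; case: WH => _ [_ [_ [_ [_ [_ [_ [_ [_ [_ [hone _]]]]]]]]]].
by have := hone V F hF; rewrite !big_allpairs_dep.
Qed.

Definition eps_t h := \sum_(q <- cop 1) eps (q.1 * h) *: q.2.
Definition eps_s h := \sum_(q <- cop 1) eps (h * q.2) *: q.1.

Lemma cop_mulS h : \sum_(p <- cop h) p.1 * S p.2 = eps_t h.
Proof. by case: WH => _ [_ [_ [_ [_ [_ [_ [_ [_ [_ [_ []]]]]]]]]]]. Qed.

Lemma cop_Smul h : \sum_(p <- cop h) S p.1 * p.2 = eps_s h.
Proof. by case: WH => _ [_ [_ [_ [_ [_ [_ [_ [_ [_ [_ [_ []]]]]]]]]]]]. Qed.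

Lemma S_cop2 h : S h = \sum_(p <- cop h) \sum_(q <- cop p.1) S q.1 * q.2 * S p.2.
Proof.
case: WH => _ [_ [_ [_ [_ [_ [_ [_ [_ [_ [_ [_ [_ ->]]]]]]]]]]]].
by rewrite big_allpairs_dep.
Qed.

Lemma cop_one_mul_sum (V : lmodType K) (F : H -> H -> V) :
  bilinear_map F -> forall h,
  \sum_(p <- cop 1) \sum_(q <- cop h) F (p.1 * q.1) (p.2 * q.2) =
  \sum_(p <- cop h) F p.1 p.2.
Proof. by move=> hF h; rewrite -cop_mul_sum // mul1r. Qed.

Lemma cop_mul_one_sum (V : lmodType K) (F : H -> H -> V) :
  bilinear_map F -> forall h,
  \sum_(p <- cop h) \sum_(q <- cop 1) F (p.1 * q.1) (p.2 * q.2) =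
  \sum_(p <- cop h) F p.1 p.2.
Proof. by move=> hF h; rewrite -cop_mul_sum // mulr1. Qed.

Lemma cop_eps_t (V : lmodType K) (G : H -> H -> V) : bilinear_map G -> forall x,
  \sum_(p <- cop x) G p.1 (eps_t p.2) = \sum_(b <- cop 1) G (b.1 * x) b.2.
Proof.
move=> /bilinear_mapP[hG1 hG2] x.
transitivity (\sum_(p <- cop x) \sum_(b <- cop 1) eps (b.1 * p.2) *: G p.1 b.2).
  apply: eq_bigr => p _; rewrite (lin_sum (hG2 _)).
  by apply: eq_bigr => b _; rewrite (linZ (hG2 _)).
symmetry; transitivity (\sum_(b <- cop 1) \sum_(c <- cop b.1)
   (fun u v w => \sum_(p <- cop x) eps (v * p.2) *: G (u * p.1) w) c.1 c.2 b.2).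
  apply: eq_bigr => b _.
  rewrite -{1}(counitr (b.1 * x)) (lin_sum (hG1 _)).
  rewrite (cop_mul_sum (F := fun u v => G (eps v *: u) b.2)); linear_sides.
  by apply: eq_bigr => c _; apply: eq_bigr => p _; rewrite (linZ (hG1 _)).
rewrite -(cop2_onel (F := fun u v w =>
  \sum_(p <- cop x) eps (v * p.2) *: G (u * p.1) w)); linear_sides.
rewrite [RHS]exchange_big /=; apply: eq_bigr => b _.
under eq_bigr do under eq_bigr do rewrite -mulrA.
by rewrite (cop_one_mul_sum (F := fun u v => eps (b.1 * v) *: G u b.2)); linear_sides.
Qed.

Lemma cop_eps_s (V : lmodType K) (G : H -> H -> V) : bilinear_map G -> forall x,
  \sum_(p <- cop x) G (eps_s p.1) p.2 = \sum_(b <- cop 1) G b.1 (x * b.2).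
Proof.
move=> /bilinear_mapP[hG1 hG2] x.
transitivity (\sum_(p <- cop x) \sum_(a <- cop 1) eps (p.1 * a.2) *: G a.1 p.2).
  apply: eq_bigr => p _; rewrite (lin_sum (hG1 _)).
  by apply: eq_bigr => b _; rewrite (linZ (hG1 _)).
symmetry; transitivity (\sum_(b <- cop 1) \sum_(c <- cop b.2)
   (fun u v w => \sum_(p <- cop x) eps (p.1 * v) *: G u (p.2 * w)) b.1 c.1 c.2).
  apply: eq_bigr => b _.
  rewrite -{1}(counitl (x * b.2)) (lin_sum (hG2 _)).
  rewrite (cop_mul_sum (F := fun u v => G b.1 (eps u *: v))); linear_sides.
  rewrite exchange_big /=.
  by apply: eq_bigr => c _; apply: eq_bigr => p _; rewrite (linZ (hG2 _)).
rewrite -(coassoc_sum (F := fun u v w =>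
  \sum_(p <- cop x) eps (p.1 * v) *: G u (p.2 * w))); linear_sides.
rewrite -(cop2_onel (F := fun u v w =>
  \sum_(p <- cop x) eps (p.1 * v) *: G u (p.2 * w))); linear_sides.
rewrite exchange_big [RHS]exchange_big /=; apply: eq_bigr => q _.
rewrite exchange_big /=.
under eq_bigr do under eq_bigr do rewrite mulrA.
by rewrite (cop_mul_one_sum (F := fun u v => eps (u * q.2) *: G q.1 v)); linear_sides.
Qed.

Lemma cop_eps_mul_one (V : lmodType K) (G : H -> H -> V) : bilinear_map G -> forall x,
  \sum_(p <- cop x) \sum_(b <- cop 1) eps (p.2 * b.1) *: G p.1 b.2 =
  \sum_(b <- cop 1) G (x * b.1) b.2.
Proof.
move=> /bilinear_mapP[hG1 hG2] x.
symmetry; transitivity (\sum_(b <- cop 1) \sum_(c <- cop b.1)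
   (fun u v w => \sum_(p <- cop x) eps (p.2 * v) *: G (p.1 * u) w) c.1 c.2 b.2).
  apply: eq_bigr => b _.
  rewrite -{1}(counitr (x * b.1)) (lin_sum (hG1 _)).
  rewrite (cop_mul_sum (F := fun u v => G (eps v *: u) b.2)); linear_sides.
  rewrite exchange_big /=.
  by apply: eq_bigr => c _; apply: eq_bigr => p _; rewrite (linZ (hG1 _)).
rewrite (cop2_oner (F := fun u v w =>
  \sum_(p <- cop x) eps (p.2 * v) *: G (p.1 * u) w)); linear_sides.
rewrite exchange_big [RHS]exchange_big /=; apply: eq_bigr => b _.
rewrite exchange_big /=.
under eq_bigr do under eq_bigr do rewrite mulrA.
by rewrite (cop_mul_one_sum (F := fun u v => eps (v * b.1) *: G u b.2)); linear_sides.
Qed.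

Lemma cop_eps_s_one (V : lmodType K) (G : H -> H -> V) : bilinear_map G -> forall x,
  \sum_(p <- cop x) G p.1 (eps_s p.2) = \sum_(b <- cop 1) G (x * b.1) (eps_s b.2).
Proof.
move=> /bilinear_mapP[hG1 hG2] x.
transitivity (\sum_(a <- cop 1) \sum_(p <- cop x) \sum_(b <- cop 1)
   eps (p.2 * b.1) *: (eps (b.2 * a.2) *: G p.1 a.1)).
  rewrite exchange_big /=; apply: eq_bigr => p _.
  rewrite (lin_sum (hG2 _)); apply: eq_bigr => a _.
  rewrite (linZ (hG2 _)) -[in eps (p.2 * a.2)](mulr1 p.2) -eps_mul_copl scaler_suml.
  by apply: eq_bigr => b _; rewrite scalerA.
transitivity (\sum_(a <- cop 1) \sum_(b <- cop 1) eps (b.2 * a.2) *: G (x * b.1) a.1).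
  apply: eq_bigr => a _.
  by rewrite (cop_eps_mul_one (G := fun u v => eps (v * a.2) *: G u a.1)); linear_sides.
rewrite exchange_big /=; apply: eq_bigr => b _.
rewrite (lin_sum (hG2 _)); apply: eq_bigr => a _.
by rewrite (linZ (hG2 _)).
Qed.

Lemma eps_t_mul_eps_t x y : eps_t (x * eps_t y) = eps_t (x * y).
Proof.
apply: eq_bigr => a _; congr (_ *: _).
rewrite /eps_t !mulr_sumr (lin_sum eps_scalar) mulrA.
rewrite -[in a.1 * x * y](mulr1 (a.1 * x)) eps_mul_copr; apply: eq_bigr => b _.
by rewrite -!scalerAr (scalarZ eps_scalar) mulrC !mulrA.
Qed.

Lemma eps_s_eps_s_mul x y : eps_s (eps_s x * y) = eps_s (x * y).
Proof.
apply: eq_bigr => a _; congr (_ *: _).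
rewrite /eps_s !mulr_suml (lin_sum eps_scalar) -mulrA.
rewrite -[in x * (y * a.2)](mulr1 x) eps_mul_copr; apply: eq_bigr => b _.
by rewrite -!scalerAl (scalarZ eps_scalar) !mulrA.
Qed.

Lemma cop_sum_eps_t (V : lmodType K) (G : H -> H -> V) : bilinear_map G -> forall y,
  \sum_(r <- cop (eps_t y)) G r.1 r.2 = \sum_(c <- cop 1) G (c.1 * eps_t y) c.2.
Proof.
move=> hG y; have hcopG := linear_cop_sum (F := fun p => G p.1 p.2) hG.
move/bilinear_mapP: hG => [hG1 hG2].
rewrite {1}/eps_t (lin_sum hcopG).
transitivity (\sum_(b <- cop 1) \sum_(r <- cop b.2)
   (fun u v w => eps (u * y) *: G v w) b.1 r.1 r.2).
  by apply: eq_bigr => b _; rewrite (linZ hcopG) scaler_sumr.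
rewrite -(coassoc_sum (F := fun u v w => eps (u * y) *: G v w)); linear_sides.
rewrite -(cop2_onel (F := fun u v w => eps (u * y) *: G v w)); linear_sides.
apply: eq_bigr => p _ /=.
rewrite /eps_t mulr_sumr (lin_sum (hG1 _)); apply: eq_bigr => q _.
by rewrite -scalerAr (linZ (hG1 _)).
Qed.

Lemma cop_sum_eps_s (V : lmodType K) (G : H -> H -> V) : bilinear_map G -> forall y,
  \sum_(r <- cop (eps_s y)) G r.1 r.2 = \sum_(c <- cop 1) G c.1 (eps_s y * c.2).
Proof.
move=> hG y; have hcopG := linear_cop_sum (F := fun p => G p.1 p.2) hG.
move/bilinear_mapP: hG => [hG1 hG2].
rewrite {1}/eps_s (lin_sum hcopG).
transitivity (\sum_(a <- cop 1) \sum_(r <- cop a.1)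
   (fun u v w => eps (y * w) *: G u v) r.1 r.2 a.2).
  by apply: eq_bigr => b _; rewrite (linZ hcopG) scaler_sumr.
rewrite -(cop2_onel (F := fun u v w => eps (y * w) *: G u v)); linear_sides.
rewrite exchange_big /=; apply: eq_bigr => q _ /=.
rewrite /eps_s mulr_suml (lin_sum (hG2 _)); apply: eq_bigr => p _.
by rewrite -scalerAl (linZ (hG2 _)).
Qed.

Lemma eps_t_mul x y : eps_t (x * y) = \sum_(p <- cop x) p.1 * eps_t y * S p.2.
Proof.
rewrite -eps_t_mul_eps_t -cop_mulS (cop_mul_sum (F := fun u v => u * S v)); linear_sides.
rewrite exchange_big /=.
rewrite (cop_sum_eps_t (G := fun u v => \sum_(p <- cop x) p.1 * u * S (p.2 * v)));
  linear_sides.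
rewrite exchange_big /=.
rewrite -[RHS](cop_mul_one_sum (F := fun u v => u * eps_t y * S v)); linear_sides.
by apply: eq_bigr => p _; apply: eq_bigr => c _ /=; rewrite !mulrA.
Qed.

Lemma eps_s_mul x y : eps_s (x * y) = \sum_(q <- cop y) S q.1 * eps_s x * q.2.
Proof.
rewrite -eps_s_eps_s_mul -cop_Smul (cop_mul_sum (F := fun u v => S u * v)); linear_sides.
rewrite (cop_sum_eps_s (G := fun u v => \sum_(q <- cop y) S (u * q.1) * (v * q.2)));
  linear_sides.
rewrite -[RHS](cop_one_mul_sum (F := fun u v => S u * eps_s x * v)); linear_sides.
by apply: eq_bigr => c _; apply: eq_bigr => q _ /=; rewrite !mulrA.
Qed.

Lemma eps_s_eps_t_comm x y : eps_s x * eps_t y = eps_t y * eps_s x.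
Proof.
transitivity (\sum_(p <- cop 1) \sum_(q <- cop 1)
  (fun u v w => eps (u * y) *: (eps (x * w) *: v)) q.1 (p.1 * q.2) p.2).
  rewrite /eps_s /eps_t mulr_suml; apply: eq_bigr => p _; rewrite mulr_sumr.
  apply: eq_bigr => q _ /=.
  by rewrite -scalerAl -scalerAr !scalerA [eps (x * _) * _]mulrC.
rewrite (cop2_onel (F := fun u v w => eps (u * y) *: (eps (x * w) *: v))); linear_sides.
rewrite (cop2_oner (F := fun u v w => eps (u * y) *: (eps (x * w) *: v))); linear_sides.
rewrite /eps_s /eps_t mulr_suml; apply: eq_bigr => q _; rewrite mulr_sumr.
by apply: eq_bigr => p _ /=; rewrite -scalerAl -scalerAr.
Qed.

Lemma S_eps_t h : S h = \sum_(p <- cop h) S p.1 * eps_t p.2.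
Proof.
rewrite S_cop2 (coassoc_sum (F := fun u v w => S u * v * S w)); linear_sides.
by apply: eq_bigr => p _; rewrite -cop_mulS mulr_sumr; apply: eq_bigr => q _; rewrite mulrA.
Qed.

Lemma S_eps_s h : S h = \sum_(p <- cop h) eps_s p.1 * S p.2.
Proof. by rewrite S_cop2; apply: eq_bigr => p _; rewrite -cop_Smul mulr_suml. Qed.

Lemma S_mul_sandwich x y :
  S (x * y) = \sum_(p <- cop x) \sum_(q <- cop y) \sum_(p' <- cop p.1)
    \sum_(q' <- cop q.1) S (p'.1 * q'.1) * p'.2 * q'.2 * S q.2 * S p.2.
Proof.
rewrite S_eps_t (cop_mul_sum (F := fun u v => S u * eps_t v)); linear_sides.
transitivity (\sum_(p <- cop x) \sum_(r <- cop p.2)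
  (fun u v w => \sum_(q <- cop y) S (u * q.1) * v * eps_t q.2 * S w) p.1 r.1 r.2).
  apply: eq_bigr => p _; under eq_bigr do rewrite eps_t_mul mulr_sumr.
  rewrite exchange_big; apply: eq_bigr => r _; apply: eq_bigr => q _ /=.
  by rewrite !mulrA.
rewrite -(coassoc_sum (F := fun u v w =>
  \sum_(q <- cop y) S (u * q.1) * v * eps_t q.2 * S w)); linear_sides.
apply: eq_bigr => p _; rewrite exchange_big /=.
transitivity (\sum_(q <- cop y) \sum_(t <- cop q.2) (fun u v w =>
  \sum_(p' <- cop p.1) S (p'.1 * u) * p'.2 * v * S w * S p.2) q.1 t.1 t.2).
  apply: eq_bigr => q _; rewrite exchange_big /=; apply: eq_bigr => p' _.
  by rewrite -cop_mulS mulr_sumr mulr_suml; apply: eq_bigr => t _; rewrite !mulrA.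
rewrite -(coassoc_sum (F := fun u v w =>
  \sum_(p' <- cop p.1) S (p'.1 * u) * p'.2 * v * S w * S p.2)); linear_sides.
by apply: eq_bigr => q _; rewrite exchange_big.
Qed.

(* As in Boehm-Nill-Szlachanyi: S(x_1 y_1) x_2 y_2 = S(y_1) eps_s(x) y_2, and
   eps_s(x_1) commutes with eps_t(y_2). *)
Lemma antipodeM x y : S (x * y) = S y * S x.
Proof.
rewrite S_mul_sandwich.
transitivity (\sum_(p <- cop x) \sum_(q <- cop y) eps_s (p.1 * q.1) * S q.2 * S p.2).
  apply: eq_bigr => p _; apply: eq_bigr => q _.
  rewrite -cop_Smul (cop_mul_sum (F := fun u v => S u * v)); linear_sides.
  rewrite !mulr_suml; apply: eq_bigr => p' _; rewrite !mulr_suml.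
  by apply: eq_bigr => q' _; rewrite !mulrA.
transitivity (\sum_(p <- cop x) \sum_(q <- cop y) S q.1 * eps_s p.1 * eps_t q.2 * S p.2).
  apply: eq_bigr => p _; under eq_bigr do rewrite eps_s_mul !mulr_suml.
  rewrite (coassoc_sum (F := fun u v w => S u * eps_s p.1 * v * S w * S p.2)); linear_sides.
  apply: eq_bigr => q _; rewrite -cop_mulS mulr_sumr mulr_suml.
  by apply: eq_bigr => t _; rewrite !mulrA.
rewrite (S_eps_t y) (S_eps_s x) mulr_suml exchange_big; apply: eq_bigr => q _ /=.
rewrite mulr_sumr; apply: eq_bigr => p _.
by rewrite -(mulrA (S q.1)) eps_s_eps_t_comm !mulrA.
Qed.

Lemma eps_s1 : eps_s 1 = 1.
Proof. by rewrite -[RHS]counitr; apply: eq_bigr => q _; rewrite mul1r. Qed.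

Lemma cop_eps_s_S (V : lmodType K) (G : H -> H -> V) : bilinear_map G -> forall x,
  \sum_(p <- cop x) G p.1 (eps_s p.2) = \sum_(b <- cop 1) G (x * b.1) (S b.2).
Proof.
move=> hG x; rewrite cop_eps_s_one //; move/bilinear_mapP: hG => [hG1 hG2].
transitivity (\sum_(b <- cop 1) \sum_(q <- cop b.2)
   (fun u v w => G (x * u) (S v * w)) b.1 q.1 q.2).
  by apply: eq_bigr => b _; rewrite -cop_Smul (lin_sum (hG2 _)).
rewrite -(coassoc_sum (F := fun u v w => G (x * u) (S v * w))); linear_sides.
rewrite -(cop2_onel (F := fun u v w => G (x * u) (S v * w))); linear_sides.
rewrite exchange_big; apply: eq_bigr => q _ /=.
transitivity (G (x * q.1) (S q.2 * \sum_(p <- cop 1) S p.1 * p.2)).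
  rewrite mulr_sumr (lin_sum (hG2 _)).
  by apply: eq_bigr => p _; rewrite antipodeM mulrA.
by rewrite cop_Smul eps_s1 mulr1.
Qed.

Section PartialRepresentation.
Variables (B : algType K) (pi : H -> B).
Hypothesis HP : par_rep cop S pi.
Local Notation E := (Epar cop S pi).
Local Notation act := (par_act cop S pi).

Lemma pi_linear : linear pi.
Proof. by case: HP => hpi _ a x y; rewrite hpi. Qed.

Lemma pi1 : pi 1 = 1.
Proof. by case: HP => _ []. Qed.

Lemma pi_absorb_l h k : \sum_(p <- cop k) pi h * pi p.1 * pi (S p.2) =
  \sum_(p <- cop k) pi (h * p.1) * pi (S p.2).
Proof. by case: HP => _ [_ []]. Qed.

Lemma pi_absorbS_l h k : \sum_(p <- cop k) pi h * pi (S p.1) * pi p.2 =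
  \sum_(p <- cop k) pi (h * S p.1) * pi p.2.
Proof. by case: HP => _ [_ [_ []]]. Qed.

Lemma pi_absorbS_r h k : \sum_(p <- cop h) pi p.1 * pi (S p.2) * pi k =
  \sum_(p <- cop h) pi p.1 * pi (S p.2 * k).
Proof. by case: HP => _ [_ [_ [_ []]]]. Qed.

Lemma pi_absorb_r h k : \sum_(p <- cop h) pi (S p.1) * pi p.2 * pi k =
  \sum_(p <- cop h) pi (S p.1) * pi (p.2 * k).
Proof. by case: HP => _ [_ [_ [_ [_ []]]]]. Qed.

Lemma pi_cop2 h :
  pi h = \sum_(p <- cop h) \sum_(q <- cop p.1) pi q.1 * pi (S q.2) * pi p.2.
Proof. by case: HP => _ [_ [_ [_ [_ [_ ->]]]]]; rewrite big_allpairs_dep. Qed.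

Lemma linear_pi_comp (V : lmodType K) (f : V -> H) : linear f -> linear (fun x => pi (f x)).
Proof. exact: linear_comp pi_linear. Qed.

Lemma actl_linear c : linear (act^~ c).
Proof.
apply: (linear_cop_sum (F := fun p => pi p.1 * c * pi (S p.2))).
apply/bilinear_mapP; split=> y /=.
  by do 2!apply: linear_mulr; exact: pi_linear.
by apply: linear_mull; apply: linear_pi_comp; exact: S_linear.
Qed.

Lemma linear_actl_comp (V : lmodType K) (f : V -> H) c :
  linear f -> linear (fun x => act (f x) c).
Proof. exact: linear_comp (actl_linear c). Qed.

Lemma act_linear h : linear (act h).
Proof. by apply: linear_big => p; apply: linear_mulr; apply: linear_mull. Qed.

Lemma E_linear : linear E.
Proof.
apply: (linear_cop_sum (F := fun p => pi p.1 * pi (S p.2))).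
apply/bilinear_mapP; split=> y /=.
  by apply: linear_mulr; exact: pi_linear.
by apply: linear_mull; apply: linear_pi_comp; exact: S_linear.
Qed.

Lemma linear_E_comp (V : lmodType K) (f : V -> H) : linear f -> linear (fun x => E (f x)).
Proof. exact: linear_comp E_linear. Qed.

Ltac linear_rep_step := first
  [ apply: linear_pi_comp | apply: linear_actl_comp
  | apply: linear_E_comp | linear_wh_step ].
Ltac rep_linearity := linearity_with linear_rep_step.
Ltac rep_linear_sides := try solve [rep_linearity].
Ltac eq_big_assoc := repeat (apply: eq_bigr => ? _); rewrite ?mulr1 ?mul1r ?mulrA //.

Lemma act_one h : act h 1 = E h.
Proof. by apply: eq_bigr => p _; rewrite mulr1. Qed.

Definition pi_commute a := forall h, pi h * a = \sum_(p <- cop h) act p.1 a * pi p.2.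

Lemma pi_commute1 : pi_commute 1.
Proof.
move=> h; rewrite mulr1 pi_cop2; apply: eq_bigr => p _.
by rewrite mulr_suml; apply: eq_bigr => q _; rewrite mulr1.
Qed.

Lemma pi_commuteD a b : pi_commute a -> pi_commute b -> pi_commute (a + b).
Proof.
move=> ha hb h; rewrite mulrDr ha hb -big_split /=; apply: eq_bigr => p _.
by rewrite (linD (act_linear _)) mulrDl.
Qed.

Lemma pi_commuteZ c a : pi_commute a -> pi_commute (c *: a).
Proof.
move=> ha h; rewrite -scalerAr ha scaler_sumr; apply: eq_bigr => p _.
by rewrite (linZ (act_linear _)) scalerAl.
Qed.

Lemma pi_commuteM a b : pi_commute a -> pi_commute b -> pi_commute (a * b).
Proof.
move=> ha hb h; rewrite mulrA ha mulr_suml.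
transitivity (\sum_(p <- cop h) \sum_(r <- cop p.2) \sum_(t <- cop r.1)
   (fun u1 u2 u3 u4 => act u1 a * pi u2 * b * pi (S u3) * pi u4) p.1 t.1 t.2 r.2).
  apply: eq_bigr => p _ /=; rewrite -mulrA hb mulr_sumr; apply: eq_bigr => r _.
  by rewrite [act r.1 b]/par_act mulr_suml mulr_sumr; apply: eq_bigr => t _; rewrite !mulrA.
rewrite -(coassoc_sum (F := fun u v w => \sum_(s <- cop v)
    (fun u1 u2 u3 u4 => act u1 a * pi u2 * b * pi (S u3) * pi u4) u s.1 s.2 w));
  rep_linear_sides.
transitivity (\sum_(p <- cop h) \sum_(q <- cop p.1) \sum_(s <- cop q.1)
   (fun u1 u2 u3 u4 => act u1 a * pi u2 * b * pi (S u3) * pi u4) s.1 s.2 q.2 p.2).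
  apply: eq_bigr => p _.
  by rewrite -(coassoc_sum (F := fun u v w => (fun u1 u2 u3 u4 =>
    act u1 a * pi u2 * b * pi (S u3) * pi u4) u v w p.2)); rep_linear_sides.
apply: eq_bigr => p _; rewrite [act p.1 _]/par_act mulr_suml; apply: eq_bigr => q _ /=.
by rewrite mulrA ha !mulr_suml; apply: eq_bigr => s _; rewrite ?mulrA.
Qed.

Lemma act_mul a : pi_commute a ->
  forall h b, act h (a * b) = \sum_(p <- cop h) act p.1 a * act p.2 b.
Proof.
move=> ha h b.
transitivity (\sum_(p <- cop h) \sum_(q <- cop p.1)
   (fun u v w => act u a * pi v * b * pi (S w)) q.1 q.2 p.2).
  apply: eq_bigr => p _.
  by rewrite mulrA ha !mulr_suml; apply: eq_bigr => q _ /=; rewrite ?mulrA.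
rewrite (coassoc_sum (F := fun u v w => act u a * pi v * b * pi (S w))); rep_linear_sides.
apply: eq_bigr => p _ /=; rewrite [act p.2 b]/par_act mulr_sumr.
by apply: eq_bigr => q _; rewrite ?mulrA.
Qed.

Lemma act_split_r c :
  pi_commute c -> forall h, act h c = \sum_(p <- cop h) act p.1 c * E p.2.
Proof.
move=> hc h; rewrite -[in LHS](mulr1 c) act_mul //.
by apply: eq_bigr => p _; rewrite act_one.
Qed.

Lemma act_split_l c h : act h c = \sum_(p <- cop h) E p.1 * act p.2 c.
Proof.
rewrite -[in LHS](mul1r c) (act_mul pi_commute1).
by apply: eq_bigr => p _; rewrite act_one.
Qed.

Lemma cop_E_mul_pi h k : \sum_(p <- cop h) E (p.1 * k) * pi p.2 =
  \sum_(p <- cop h) act p.1 (E k) * pi p.2.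
Proof.
transitivity (\sum_(p <- cop h) \sum_(q <- cop p.1) (fun u v w =>
   \sum_(s <- cop k) pi (u * s.1) * pi (S s.2 * S v) * pi w) q.1 q.2 p.2).
  apply: eq_bigr => p _.
  rewrite /Epar (cop_mul_sum (F := fun u v => pi u * pi (S v))); rep_linear_sides.
  rewrite mulr_suml; apply: eq_bigr => q _; rewrite mulr_suml.
  by apply: eq_bigr => s _ /=; rewrite antipodeM.
rewrite (coassoc_sum (F := fun u v w =>
   \sum_(s <- cop k) pi (u * s.1) * pi (S s.2 * S v) * pi w)); rep_linear_sides.
transitivity (\sum_(p <- cop h) \sum_(q <- cop p.2) \sum_(s <- cop k)
   pi (p.1 * s.1) * (pi (S s.2) * pi (S q.1) * pi q.2) * 1).
  apply: eq_bigr => p _ /=; rewrite exchange_big [RHS]exchange_big.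
  apply: eq_bigr => s _ /=.
  rewrite (big_mul_ctx _ _ (pi_absorbS_l _ _)).
  by apply: eq_bigr => q _; rewrite mulr1 mulrA.
transitivity (\sum_(p <- cop h) \sum_(q <- cop p.1) (fun u v w =>
   \sum_(s <- cop k) pi (u * s.1) * pi (S s.2) * pi (S v) * pi w) q.1 q.2 p.2).
  rewrite (coassoc_sum (F := fun u v w =>
   \sum_(s <- cop k) pi (u * s.1) * pi (S s.2) * pi (S v) * pi w)); rep_linear_sides.
  eq_big_assoc.
apply: eq_bigr => p _ /=; rewrite [act p.1 _]/par_act mulr_suml; apply: eq_bigr => q _.
transitivity (\sum_(s <- cop k)
  1 * (pi (q.1 * s.1) * pi (S s.2)) * (pi (S q.2) * pi p.2)).
  eq_big_assoc.
by rewrite -(big_mul_ctx _ _ (pi_absorb_l _ _)) /Epar mulr_sumr !mulr_suml; eq_big_assoc.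
Qed.

(* Both sides reduce to [h k_1][S k_2]; on the right this needs
   h_1 (x) eps_s(h_2) = h 1_1 (x) S(1_2). *)
Lemma pi_mul_E h k : pi h * E k = \sum_(p <- cop h) E (p.1 * k) * pi p.2.
Proof.
transitivity (\sum_(s <- cop k) pi (h * s.1) * pi (S s.2)).
  by rewrite /Epar mulr_sumr -pi_absorb_l; eq_big_assoc.
symmetry.
transitivity (\sum_(p <- cop h) \sum_(q <- cop p.1) (fun u v w =>
   \sum_(s <- cop k) pi (u * s.1) * pi (S s.2 * S v * w)) q.1 q.2 p.2).
  apply: eq_bigr => p _; rewrite /Epar mulr_suml pi_absorbS_r.
  rewrite (cop_mul_sum (F := fun u v => pi u * pi (S v * p.2))); rep_linear_sides.
  by apply: eq_bigr => q _; apply: eq_bigr => s _ /=; rewrite antipodeM.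
rewrite (coassoc_sum (F := fun u v w =>
   \sum_(s <- cop k) pi (u * s.1) * pi (S s.2 * S v * w))); rep_linear_sides.
transitivity (\sum_(p <- cop h) (fun u v =>
   \sum_(s <- cop k) pi (u * s.1) * pi (S s.2 * v)) p.1 (eps_s p.2)).
  apply: eq_bigr => p _ /=; rewrite -cop_Smul.
  have hlin : linear (fun v => \sum_(s <- cop k) pi (p.1 * s.1) * pi (S s.2 * v)).
    by rep_linearity.
  rewrite (lin_sum hlin (cop p.2) (fun q => S q.1 * q.2)).
  eq_big_assoc.
rewrite (cop_eps_s_S (G := fun u v =>
  \sum_(s <- cop k) pi (u * s.1) * pi (S s.2 * v))); rep_linear_sides.
rewrite -(cop_one_mul_sum (F := fun u v => pi (h * u) * pi (S v))); rep_linear_sides.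
by apply: eq_bigr => b _; apply: eq_bigr => s _ /=; rewrite antipodeM mulrA.
Qed.

Lemma pi_commuteE k : pi_commute (E k).
Proof. by move=> h; rewrite pi_mul_E cop_E_mul_pi. Qed.

Lemma E_mul_piS h k : E k * pi (S h) = \sum_(p <- cop h) pi (S p.1) * E (p.2 * k).
Proof.
transitivity (\sum_(s <- cop k) pi s.1 * pi (S (h * s.2))).
  by rewrite /Epar mulr_suml pi_absorbS_r; apply: eq_bigr => s _; rewrite antipodeM.
symmetry; transitivity (\sum_(p <- cop h) \sum_(q <- cop p.2) (fun u v w =>
   \sum_(s <- cop k) pi (S u * (v * s.1)) * pi (S (w * s.2))) p.1 q.1 q.2).
  apply: eq_bigr => p _; rewrite /Epar mulr_sumr.
  under eq_bigr do rewrite mulrA.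
  by rewrite pi_absorb_l (cop_mul_sum (F := fun u v => pi (S p.1 * u) * pi (S v)));
    rep_linear_sides.
rewrite -(coassoc_sum (F := fun u v w =>
   \sum_(s <- cop k) pi (S u * (v * s.1)) * pi (S (w * s.2)))); rep_linear_sides.
transitivity (\sum_(p <- cop h) (fun u v =>
   \sum_(s <- cop k) pi (u * s.1) * pi (S (v * s.2))) (eps_s p.1) p.2).
  apply: eq_bigr => p _ /=; rewrite -cop_Smul.
  have hlin : linear (fun u => \sum_(s <- cop k) pi (u * s.1) * pi (S (p.2 * s.2))).
    by rep_linearity.
  rewrite (lin_sum hlin (cop p.1) (fun q => S q.1 * q.2)).
  eq_big_assoc.
rewrite (cop_eps_s (G := fun u v =>
  \sum_(s <- cop k) pi (u * s.1) * pi (S (v * s.2)))); rep_linear_sides.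
rewrite -(cop_one_mul_sum (F := fun u v => pi u * pi (S (h * v)))); rep_linear_sides.
by apply: eq_bigr => b _; apply: eq_bigr => s _ /=; rewrite mulrA.
Qed.

Lemma actE_l h k : act h (E k) = \sum_(p <- cop h) E p.1 * E (p.2 * k).
Proof.
transitivity (\sum_(p <- cop h) \sum_(q <- cop p.2)
   (fun u v w => pi u * pi (S v) * E (w * k)) p.1 q.1 q.2).
  apply: eq_bigr => p _; rewrite -mulrA E_mul_piS mulr_sumr.
  by apply: eq_bigr => q _; rewrite mulrA.
rewrite -(coassoc_sum (F := fun u v w => pi u * pi (S v) * E (w * k))); rep_linear_sides.
by apply: eq_bigr => p _; rewrite /Epar mulr_suml.
Qed.

Lemma actE_r h k : act h (E k) = \sum_(p <- cop h) E (p.1 * k) * E p.2.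
Proof.
transitivity (\sum_(p <- cop h) \sum_(q <- cop p.1)
   (fun u v w => E (u * k) * pi v * pi (S w)) q.1 q.2 p.2).
  by apply: eq_bigr => p _; rewrite pi_mul_E mulr_suml.
rewrite (coassoc_sum (F := fun u v w => E (u * k) * pi v * pi (S w))); rep_linear_sides.
apply: eq_bigr => p _; rewrite [E p.2]/Epar mulr_sumr.
by apply: eq_bigr => q _; rewrite mulrA.
Qed.

(* (1_1 . a) E_(1_2) collapses to (1_1 . a) [1_2] = [1] a through
   x_1 (x) eps_t(x_2) = 1_1 x (x) 1_2. *)
Lemma act1 a : pi_commute a -> act 1 a = a.
Proof.
move=> ha; rewrite (act_split_r ha).
transitivity (\sum_(p <- cop 1) \sum_(q <- cop p.1) (fun u v w => \sum_(t <- cop w)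
   pi u * a * pi (S v) * pi t.1 * pi (S t.2)) q.1 q.2 p.2).
  apply: eq_bigr => p _; rewrite /par_act /Epar mulr_suml; apply: eq_bigr => q _ /=.
  rewrite mulr_sumr; eq_big_assoc.
rewrite (coassoc_sum (F := fun u v w => \sum_(t <- cop w)
   pi u * a * pi (S v) * pi t.1 * pi (S t.2))); rep_linear_sides.
transitivity (\sum_(p <- cop 1) \sum_(q <- cop p.2) \sum_(t <- cop q.1)
   (pi p.1 * a) * (pi (S t.1) * pi t.2 * pi (S q.2)) * 1).
  apply: eq_bigr => p _ /=.
  rewrite -(coassoc_sum (F := fun u v w => pi p.1 * a * pi (S u) * pi v * pi (S w)));
    rep_linear_sides.
  eq_big_assoc.
transitivity (\sum_(p <- cop 1) \sum_(q <- cop p.2) \sum_(t <- cop q.1)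
   (pi p.1 * a) * (pi (S t.1) * pi (t.2 * S q.2)) * 1).
  apply: eq_bigr => p _; apply: eq_bigr => q _.
  by rewrite (big_mul_ctx _ _ (pi_absorb_r _ _)).
transitivity (\sum_(p <- cop 1) \sum_(b <- cop 1)
   (fun u v w => pi u * a * pi (S v) * pi w) p.1 (b.1 * p.2) b.2).
  apply: eq_bigr => p _.
  transitivity (\sum_(q <- cop p.2) pi p.1 * a * pi (S q.1) * pi (eps_t q.2)).
    rewrite (coassoc_sum (F := fun u v w => (pi p.1 * a) * (pi (S u) * pi (v * S w)) * 1));
      rep_linear_sides.
    apply: eq_bigr => q _ /=.
    by rewrite -cop_mulS (lin_sum pi_linear) !mulr_sumr; eq_big_assoc.
  by rewrite (cop_eps_t (G := fun u v => pi p.1 * a * pi (S u) * pi v)); rep_linear_sides.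
rewrite exchange_big /=.
rewrite (cop2_onel (F := fun u v w => pi u * a * pi (S v) * pi w)); rep_linear_sides.
transitivity (\sum_(p <- cop 1) act p.1 a * pi p.2).
  by apply: eq_bigr => p _; rewrite /par_act mulr_suml.
by rewrite -ha pi1 mul1r.
Qed.

Local Notation inA := (in_gen_subalg E).

Lemma inA1 : inA 1.
Proof. by move=> P []. Qed.

Lemma inAE h : inA (E h).
Proof. by move=> P _; apply. Qed.

Lemma inAD x y : inA x -> inA y -> inA (x + y).
Proof.
by move=> ix iy P hP hE; case: (hP) => _ [PD _]; apply: PD; [apply: ix | apply: iy].
Qed.

Lemma inAZ c x : inA x -> inA (c *: x).
Proof. by move=> ix P hP hE; case: (hP) => _ [_ [PZ _]]; apply: PZ; apply: ix. Qed.

Lemma inAM x y : inA x -> inA y -> inA (x * y).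
Proof.
by move=> ix iy P hP hE; case: (hP) => _ [_ [_ PM]]; apply: PM; [apply: ix | apply: iy].
Qed.

Lemma inA_sum I (r : seq I) (F : I -> B) :
  (forall i, inA (F i)) -> inA (\sum_(i <- r) F i).
Proof.
have inA0 : inA 0 by rewrite -(scale0r 1); apply: inAZ; exact: inA1.
by move=> iF; apply: big_ind => [|x y|i _]; [exact: inA0 | exact: inAD | exact: iF].
Qed.

Lemma inA_ind (P : B -> Prop) :
  P 1 -> (forall h, P (E h)) ->
  (forall x y, inA x -> inA y -> P x -> P y -> P (x + y)) ->
  (forall c x, inA x -> P x -> P (c *: x)) ->
  (forall x y, inA x -> inA y -> P x -> P y -> P (x * y)) ->
  forall a, inA a -> P a.
Proof.
move=> P1 PE PD PZ PM a ia; suff [] : inA a /\ P a by [].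
apply: (ia (fun x => inA x /\ P x)) => [|h]; last by split; [exact: inAE | exact: PE].
split; first by split; [exact: inA1 | exact: P1].
split=> [x y [ix Px] [iy Py] | ]; first by split; [exact: inAD | exact: PD].
split=> [c x [ix Px] | x y [ix Px] [iy Py]]; first by split; [exact: inAZ | exact: PZ].
by split; [exact: inAM | exact: PM].
Qed.

Lemma pi_commute_inA a : inA a -> pi_commute a.
Proof.
move: a; apply: (inA_ind (P := pi_commute)) => [|k|x y _ _|c x _|x y _ _].
- exact: pi_commute1.
- exact: pi_commuteE.
- exact: pi_commuteD.
- exact: pi_commuteZ.
- exact: pi_commuteM.
Qed.

Lemma inA_act a : inA a -> forall h, inA (act h a).
Proof.
move: a; apply: (inA_ind (P := fun a => forall h, inA (act h a)))
  => [h|k h|x y _ _ ix iy h|c x _ ix h|x y iax _ ix iy h].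
- by rewrite act_one; apply: inAE.
- by rewrite actE_l; apply: inA_sum => p; apply: inAM; exact: inAE.
- by rewrite (linD (act_linear h)); apply: inAD.
- by rewrite (linZ (act_linear h)); apply: inAZ.
- by rewrite (act_mul (pi_commute_inA iax)); apply: inA_sum => p; apply: inAM.
Qed.

Definition partial_actl c :=
  forall h k, act h (act k c) = \sum_(p <- cop h) E p.1 * act (p.2 * k) c.
Definition partial_actr c :=
  forall h k, act h (act k c) = \sum_(p <- cop h) act (p.1 * k) c * E p.2.

Lemma act_act_mul a b h k : inA a ->
  act h (act k (a * b)) =
  \sum_(q <- cop k) \sum_(p <- cop h) act p.1 (act q.1 a) * act p.2 (act q.2 b).
Proof.
move=> ia; rewrite (act_mul (pi_commute_inA ia)) (lin_sum (act_linear h)).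
by apply: eq_bigr => q _; rewrite (act_mul (pi_commute_inA (inA_act ia q.1))).
Qed.

Lemma partial_actlM a b :
  inA a -> partial_actl a -> partial_actl b -> partial_actl (a * b).
Proof.
move=> ia pa pb h k; rewrite act_act_mul //.
transitivity (\sum_(q <- cop k) \sum_(p <- cop h) \sum_(t <- cop p.2)
  (fun u v w => act u (act q.1 a) * E v * act (w * q.2) b) p.1 t.1 t.2).
  apply: eq_bigr => q _; apply: eq_bigr => p _ /=; rewrite pb mulr_sumr; eq_big_assoc.
transitivity (\sum_(q <- cop k) \sum_(p <- cop h) act p.1 (act q.1 a) * act (p.2 * q.2) b).
  apply: eq_bigr => q _.
  rewrite -(coassoc_sum (F := fun u v w => act u (act q.1 a) * E v * act (w * q.2) b));
    rep_linear_sides.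
  apply: eq_bigr => p _ /=.
  by rewrite (act_split_r (pi_commute_inA (inA_act ia q.1)) p.1) mulr_suml.
transitivity (\sum_(q <- cop k) \sum_(p <- cop h) \sum_(r <- cop p.1)
  (fun u v w => E u * act (v * q.1) a * act (w * q.2) b) r.1 r.2 p.2).
  apply: eq_bigr => q _; apply: eq_bigr => p _ /=.
  by rewrite pa mulr_suml.
transitivity (\sum_(q <- cop k) \sum_(p <- cop h) \sum_(r <- cop p.2)
  E p.1 * act (r.1 * q.1) a * act (r.2 * q.2) b).
  apply: eq_bigr => q _.
  by rewrite (coassoc_sum (F := fun u v w => E u * act (v * q.1) a * act (w * q.2) b));
    rep_linear_sides.
rewrite exchange_big; apply: eq_bigr => p _ /=.
rewrite (act_mul (pi_commute_inA ia)).
rewrite (cop_mul_sum (F := fun u v => act u a * act v b)); rep_linear_sides.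
rewrite mulr_sumr exchange_big; apply: eq_bigr => r _ /=.
by rewrite mulr_sumr; eq_big_assoc.
Qed.

Lemma partial_actrM a b :
  inA a -> partial_actr a -> partial_actr b -> partial_actr (a * b).
Proof.
move=> ia pa pb h k; rewrite act_act_mul //.
transitivity (\sum_(q <- cop k) \sum_(p <- cop h) \sum_(r <- cop p.1)
  (fun u v w => act (u * q.1) a * E v * act w (act q.2 b)) r.1 r.2 p.2).
  apply: eq_bigr => q _; apply: eq_bigr => p _ /=; by rewrite pa mulr_suml.
transitivity (\sum_(q <- cop k) \sum_(p <- cop h) act (p.1 * q.1) a * act p.2 (act q.2 b)).
  apply: eq_bigr => q _.
  rewrite (coassoc_sum (F := fun u v w => act (u * q.1) a * E v * act w (act q.2 b)));
    rep_linear_sides.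
  apply: eq_bigr => p _ /=.
  by rewrite [act p.2 (act q.2 b)]act_split_l mulr_sumr; eq_big_assoc.
transitivity (\sum_(q <- cop k) \sum_(p <- cop h) \sum_(r <- cop p.2)
  (fun u v w => act (u * q.1) a * act (v * q.2) b * E w) p.1 r.1 r.2).
  apply: eq_bigr => q _; apply: eq_bigr => p _ /=.
  by rewrite pb mulr_sumr; eq_big_assoc.
transitivity (\sum_(q <- cop k) \sum_(p <- cop h) \sum_(r <- cop p.1)
  act (r.1 * q.1) a * act (r.2 * q.2) b * E p.2).
  apply: eq_bigr => q _.
  by rewrite -(coassoc_sum (F := fun u v w => act (u * q.1) a * act (v * q.2) b * E w));
    rep_linear_sides.
rewrite exchange_big; apply: eq_bigr => p _ /=.
rewrite (act_mul (pi_commute_inA ia)).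
rewrite (cop_mul_sum (F := fun u v => act u a * act v b)); rep_linear_sides.
rewrite mulr_suml exchange_big; apply: eq_bigr => r _ /=.
by rewrite mulr_suml.
Qed.

Lemma act_act_act c l h k : inA c -> partial_actr c ->
  act h (act k (act l c)) =
  \sum_(q <- cop k) \sum_(p <- cop h) act p.1 (act (q.1 * l) c) * act p.2 (E q.2).
Proof.
move=> ic pcr; rewrite pcr (lin_sum (act_linear h)); apply: eq_bigr => q _.
by rewrite (act_mul (pi_commute_inA (inA_act ic _))).
Qed.

Lemma partial_actl_act c :
  inA c -> partial_actl c -> partial_actr c -> forall l, partial_actl (act l c).
Proof.
move=> ic pcl pcr l h k; rewrite act_act_act //.
transitivity (\sum_(q <- cop k) \sum_(p <- cop h) \sum_(t <- cop p.2)
  (fun u v w => act u (act (q.1 * l) c) * E v * E (w * q.2)) p.1 t.1 t.2).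
  apply: eq_bigr => q _; apply: eq_bigr => p _ /=; rewrite actE_l mulr_sumr; eq_big_assoc.
transitivity (\sum_(q <- cop k) \sum_(p <- cop h)
  act p.1 (act (q.1 * l) c) * E (p.2 * q.2)).
  apply: eq_bigr => q _.
  rewrite -(coassoc_sum (F := fun u v w => act u (act (q.1 * l) c) * E v * E (w * q.2)));
    rep_linear_sides.
  apply: eq_bigr => p _ /=.
  by rewrite (act_split_r (pi_commute_inA (inA_act ic _)) p.1) mulr_suml.
transitivity (\sum_(q <- cop k) \sum_(p <- cop h) \sum_(r <- cop p.1)
  (fun u v w => E u * act (v * (q.1 * l)) c * E (w * q.2)) r.1 r.2 p.2).
  apply: eq_bigr => q _; apply: eq_bigr => p _ /=.
  by rewrite pcl mulr_suml.
transitivity (\sum_(q <- cop k) \sum_(p <- cop h) \sum_(r <- cop p.2)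
  E p.1 * act (r.1 * (q.1 * l)) c * E (r.2 * q.2)).
  apply: eq_bigr => q _.
  by rewrite (coassoc_sum (F := fun u v w => E u * act (v * (q.1 * l)) c * E (w * q.2)));
    rep_linear_sides.
rewrite exchange_big; apply: eq_bigr => p _ /=.
rewrite pcr.
rewrite (cop_mul_sum (F := fun u v => act (u * l) c * E v)); rep_linear_sides.
rewrite mulr_sumr exchange_big; apply: eq_bigr => r _ /=.
by rewrite mulr_sumr; eq_big_assoc.
Qed.

Lemma partial_actr_act c : inA c -> partial_actr c -> forall l, partial_actr (act l c).
Proof.
move=> ic pcr l h k; rewrite act_act_act //.
transitivity (\sum_(q <- cop k) \sum_(p <- cop h) \sum_(r <- cop p.1)
  (fun u v w => act (u * (q.1 * l)) c * E v * act w (E q.2)) r.1 r.2 p.2).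
  apply: eq_bigr => q _; apply: eq_bigr => p _ /=; by rewrite pcr mulr_suml.
transitivity (\sum_(q <- cop k) \sum_(p <- cop h)
  act (p.1 * (q.1 * l)) c * act p.2 (E q.2)).
  apply: eq_bigr => q _.
  rewrite (coassoc_sum (F := fun u v w => act (u * (q.1 * l)) c * E v * act w (E q.2)));
    rep_linear_sides.
  apply: eq_bigr => p _ /=.
  by rewrite [act p.2 (E q.2)]act_split_l mulr_sumr; eq_big_assoc.
transitivity (\sum_(q <- cop k) \sum_(p <- cop h) \sum_(r <- cop p.2)
  (fun u v w => act (u * (q.1 * l)) c * E (v * q.2) * E w) p.1 r.1 r.2).
  apply: eq_bigr => q _; apply: eq_bigr => p _ /=.
  by rewrite actE_r mulr_sumr; eq_big_assoc.
transitivity (\sum_(q <- cop k) \sum_(p <- cop h) \sum_(r <- cop p.1)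
  act (r.1 * (q.1 * l)) c * E (r.2 * q.2) * E p.2).
  apply: eq_bigr => q _.
  by rewrite -(coassoc_sum (F := fun u v w => act (u * (q.1 * l)) c * E (v * q.2) * E w));
    rep_linear_sides.
rewrite exchange_big; apply: eq_bigr => p _ /=.
rewrite pcr.
rewrite (cop_mul_sum (F := fun u v => act (u * l) c * E v)); rep_linear_sides.
rewrite mulr_suml exchange_big; apply: eq_bigr => r _ /=.
by rewrite mulr_suml; eq_big_assoc.
Qed.

Lemma partial_actl1 : partial_actl 1.
Proof. by move=> h k; rewrite act_one actE_l; apply: eq_bigr => p _; rewrite act_one. Qed.

Lemma partial_actr1 : partial_actr 1.
Proof. by move=> h k; rewrite act_one actE_r; apply: eq_bigr => p _; rewrite act_one. Qed.

Lemma partial_act_inA c : inA c -> partial_actl c /\ partial_actr c.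
Proof.
move: c; apply: (inA_ind (P := fun c => partial_actl c /\ partial_actr c)).
- by split; [exact: partial_actl1 | exact: partial_actr1].
- move=> k; rewrite -act_one; split.
    exact: partial_actl_act inA1 partial_actl1 partial_actr1 k.
  exact: partial_actr_act inA1 partial_actr1 k.
- move=> x y _ _ [lx rx] [ly ry]; split=> h k; rewrite !(linD (act_linear _)).
    rewrite lx ly -big_split; apply: eq_bigr => p _.
    by rewrite (linD (act_linear _)) mulrDr.
  rewrite rx ry -big_split; apply: eq_bigr => p _.
  by rewrite (linD (act_linear _)) mulrDl.
- move=> c x _ [lx rx]; split=> h k; rewrite !(linZ (act_linear _)).
    rewrite lx scaler_sumr; apply: eq_bigr => p _.
    by rewrite (linZ (act_linear _)) scalerAr.
  rewrite rx scaler_sumr; apply: eq_bigr => p _.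
  by rewrite (linZ (act_linear _)) scalerAl.
- move=> x y ix _ [lx rx] [ly ry].
  by split; [exact: partial_actlM | exact: partial_actrM].
Qed.

End PartialRepresentation.

End WeakHopfAlgebra.

Unset Implicit Arguments.

Theorem proposition4p6 (K : fieldType) (H : algType K)
    (cop : H -> seq (H * H)) (eps : H -> K) (S : H -> H)
    (B : algType K) (pi : H -> B) :
  is_weak_hopf cop eps S ->
  is_Hpar cop S pi ->
  let inA := in_gen_subalg (Epar cop S pi) in
  let act := par_act cop S pi in
  (* the map h (x) a |-> h . a is well defined: linear in h and a,
     with values in A *)
  (forall c h k a, inA a -> act (c *: h + k) a = c *: act h a + act k a) /\
  (forall h c a b, inA a -> inA b -> act h (c *: a + b) = c *: act h a + act h b) /\
  (forall h a, inA a -> inA (act h a)) /\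
  sym_partial_module_subalg cop inA act.
Proof.
move=> WH [HP _]; cbv zeta.
split; first by move=> c h k a _; exact: (actl_linear WH HP a c h k).
split; first by move=> h c a b _ _; apply: act_linear.
split; first by move=> h a ia; exact: (inA_act WH HP ia).
split; first by move=> h a b ia _; exact: (act_mul WH HP (pi_commute_inA WH HP ia)).
split; first by move=> a ia; exact: (act1 WH HP (pi_commute_inA WH HP ia)).
split=> h k a ia; have [pl pr] := partial_act_inA WH HP ia.
  by rewrite pl; under [RHS]eq_bigr do rewrite act_one.
by rewrite pr; under [RHS]eq_bigr do rewrite act_one.
Qed.
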